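(* On $\mathcal H=\mathbb C^3$ with orthonormal basis $\{|0\rangle,|1\rangle,|2\rangle\}$, let $A_1=\tfrac14\big(2|0\rangle\langle0|+|2\rangle\langle2|+\sqrt2(|0\rangle\langle2|+|2\rangle\langle0|)\big)$, $A_2=I-A_1$, $B_1=\tfrac12\big(2|0\rangle\langle0|+|2\rangle\langle2|\big)$, $B_2=I-B_1$. Then there is no POVM $\{G_\lambda\}_\lambda$ with $\|G_\lambda\|=1$ for all $\lambda$ such that both $\{A_a\}$ and $\{B_b\}$ are classical post-processings of $\{G_\lambda\}$; consequently the set $\{\{A_a\},\{B_b\}\}$ allows for a proof of contextuality of quantum theory.
   Context: $\|\cdot\|$ is the operator norm. A classical post-processing of $\{G_\lambda\}$ is a POVM $A_k=\sum_\lambda p(k|\lambda)G_\lambda$ with $p(\cdot|\lambda)$ probability distributions. A set of observables $\mathcal A$ allows for a proof of contextuality of quantum theory if there do not exist a POVM $\{G_\lambda\}$ and states $\{\sigma_\lambda\}$ (finite index set) with $A_k=\sum_\lambda\mathrm{tr}[\sigma_\lambda A_k]G_\lambda$ for all $\{A_k\}\in\mathcal A$ and all $k$. *)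

(* the Hilbert space C^3 is 'cV[R[i]]_3 with R : realType
   (so R[i] is the complex numbers), operators are 'M[R[i]]_3. *)
From mathcomp Require Import all_boot all_order all_algebra.
From mathcomp Require Import reals.
From mathcomp Require Export complex.
Set Implicit Arguments. Unset Strict Implicit. Unset Printing Implicit Defensive.
Import GRing.Theory Num.Theory.
Local Open Scope ring_scope.

Section Defs.
Variable R : realType.
Local Notation C := R[i].

Definition adjoint {m n} (A : 'M[C]_(m, n)) : 'M[C]_(n, m) := (map_mx Num.conj A)^T.

Definition vnorm {d} (v : 'cV[C]_d) : C := sqrtC (\sum_i `|v i 0| ^+ 2).

Definition is_opnorm {d} (A : 'M[C]_d) (t : C) : Prop :=
  (forall v : 'cV[C]_d, vnorm (A *m v) <= t * vnorm v) /\
  (forall s : C, (forall v : 'cV[C]_d, vnorm (A *m v) <= s * vnorm v) -> t <= s).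

Definition psd {d} (A : 'M[C]_d) : Prop :=
  adjoint A = A /\ forall v : 'cV[C]_d, 0 <= (adjoint v *m A *m v) 0 0.

Definition is_state {d} (s : 'M[C]_d) : Prop := psd s /\ \tr s = 1.

Definition is_POVM {d n} (G : 'I_n -> 'M[C]_d) : Prop :=
  (forall l, psd (G l)) /\ \sum_l G l = 1%:M.

Definition post_processing {d m n} (A : 'I_m -> 'M[C]_d) (G : 'I_n -> 'M[C]_d) : Prop :=
  exists p : 'I_m -> 'I_n -> C,
    (forall k l, 0 <= p k l) /\ (forall l, \sum_k p k l = 1) /\
    (forall k, A k = \sum_l p k l *: G l).

Definition observable d := {m : nat & 'I_m -> 'M[C]_d}.

Definition allows_contextuality {d} (Obs : observable d -> Prop) : Prop :=
  ~ exists n (G : 'I_n -> 'M[C]_d) (sigma : 'I_n -> 'M[C]_d),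
      is_POVM G /\ (forall l, is_state (sigma l)) /\
      forall O, Obs O -> forall k,
        projT2 O k = \sum_l \tr (sigma l *m projT2 O k) *: G l.

Definition i0 : 'I_3 := @Ordinal 3 0 isT.
Definition i2 : 'I_3 := @Ordinal 3 2 isT.

Definition A1 : 'M[C]_3 :=
  4^-1 *: (2 *: delta_mx i0 i0 + delta_mx i2 i2
           + sqrtC 2 *: (delta_mx i0 i2 + delta_mx i2 i0)).
Definition A2 : 'M[C]_3 := 1%:M - A1.
Definition B1 : 'M[C]_3 := 2^-1 *: (2 *: delta_mx i0 i0 + delta_mx i2 i2).
Definition B2 : 'M[C]_3 := 1%:M - B1.

Definition Aobs : 'I_2 -> 'M[C]_3 := fun a => if val a == 0%N then A1 else A2.
Definition Bobs : 'I_2 -> 'M[C]_3 := fun b => if val b == 0%N then B1 else B2.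

End Defs.

From mathcomp Require Import all_boot all_order all_algebra.
From mathcomp Require Import reals complex ring.
Set Implicit Arguments. Unset Strict Implicit. Unset Printing Implicit Defensive.
Import Order.TTheory GRing.Theory Num.Theory.
Local Open Scope ring_scope.

(* A1 = w w^* / 4 with w = (sqrt2, 0, 1), so every positive effect G_l that occurs in A1
   with nonzero weight is k w w^* for some k >= 0 (its kernel contains |1> and
   (1, 0, -sqrt2)).  If k > 0 then <0|G_l|0> = 2k > 0 while <0|B2|0> = 0, so G_l occurs
   in B2 with weight 0 and hence in B1 with weight 1.  Everything is tested on
   x = (1, 0, sqrt2), where <x|A1|x> = <x|B1|x> = 2 and <x|w w^*|x> = 8.
   If ||G_l|| = 1 then 3k >= 1, so <x|B1|x> >= 8k > 2.  In a noncontextual model the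
   weights are tr(sigma_l A1) and tr(sigma_l B1); tr(sigma_l B2) = 0 forces
   sigma_l = |0><0|, so tr(sigma_l A1) <x|G_l|x> <= tr(sigma_l B1) <x|G_l|x> / 2 for all l,
   and summing over l gives 2 <= 1. *)

Section QuadraticForm.
Variables (R : realType) (d : nat).
Local Notation C := R[i].
Local Notation vec := 'cV[C]_d.

Lemma adjointE m n (A : 'M[C]_(m, n)) i j : adjoint A i j = (A j i)^*.
Proof. by rewrite !mxE. Qed.

Lemma adjoint_mul m n p (A : 'M[C]_(m, n)) (B : 'M[C]_(n, p)) :
  adjoint (A *m B) = adjoint B *m adjoint A.
Proof. by rewrite /adjoint map_mxM trmx_mul. Qed.

Lemma adjointB m n (A B : 'M[C]_(m, n)) : adjoint (A - B) = adjoint A - adjoint B.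
Proof. by apply/matrixP => i j; rewrite !mxE rmorphB. Qed.

Lemma adjointZ m n (a : C) (A : 'M[C]_(m, n)) : adjoint (a *: A) = a^* *: adjoint A.
Proof. by apply/matrixP => i j; rewrite !mxE rmorphM. Qed.

Lemma psd_conj (M : 'M[C]_d) i j : psd M -> M i j = (M j i)^*.
Proof. by case=> hM _; rewrite -{1}hM adjointE. Qed.

Definition qform (M : 'M[C]_d) (v : vec) : C := (adjoint v *m M *m v) 0 0.

Lemma qformD M N v : qform (M + N) v = qform M v + qform N v.
Proof. by rewrite /qform mulmxDr mulmxDl mxE. Qed.

Lemma qformZ a M v : qform (a *: M) v = a * qform M v.
Proof. by rewrite /qform -scalemxAr -scalemxAl mxE. Qed.

Lemma qform_sum n (c : 'I_n -> C) (G : 'I_n -> 'M[C]_d) v :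
  qform (\sum_l c l *: G l) v = \sum_l c l * qform (G l) v.
Proof.
rewrite /qform mulmx_sumr mulmx_suml summxE; apply: eq_bigr => l _.
by rewrite -scalemxAr -scalemxAl mxE.
Qed.

Lemma adjoint_delta m n (i : 'I_m) (j : 'I_n) :
  adjoint (delta_mx i j : 'M[C]_(m, n)) = delta_mx j i.
Proof. by rewrite /adjoint map_delta_mx ?conjC0 ?conjC1 // trmx_delta. Qed.

Lemma qform_delta M i : qform M (delta_mx i 0) = M i i.
Proof. by rewrite /qform adjoint_delta -rowE -colE !mxE. Qed.

Lemma qform_delta_mx i j v : qform (delta_mx i j) v = (v i 0)^* * v j 0.
Proof.
rewrite /qform -(mul_delta_mx (0 : 'I_1)) mulmxA -colE -mulmxA -rowE.
by rewrite !mxE big_ord1 !mxE.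
Qed.

Lemma psd_diag_ge0 (M : 'M[C]_d) i : psd M -> 0 <= M i i.
Proof. by move=> hM; rewrite -qform_delta hM.2. Qed.

Lemma dotmx_ge0 (w : vec) : 0 <= (adjoint w *m w) 0 0.
Proof.
rewrite mxE; apply: sumr_ge0 => i _; rewrite !mxE mulrC; exact: mul_conjC_ge0.
Qed.

Lemma dotmx_eq0 (w : vec) : (adjoint w *m w) 0 0 = 0 -> w = 0.
Proof.
rewrite mxE => w0; apply/matrixP => i j; rewrite (ord1 j) mxE.
have terms_ge0 k : xpredT k -> 0 <= adjoint w 0 k * w k 0.
  by move=> _; rewrite !mxE mulrC; exact: mul_conjC_ge0.
have /eqP := psumr_eq0P terms_ge0 w0 (i := i) isT.
by rewrite !mxE mulrC mul_conjC_eq0 => /eqP.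
Qed.

(* With [w = M v] and [<v, M v> = 0], for real [s] we get
   [<v - s w, M (v - s w)> = - 2 s <w, w> + s^2 <w, M w>],
   which is negative for small [s > 0] unless [w = 0]. *)
Lemma psd_mulmx_eq0 (M : 'M[C]_d) v : psd M -> qform M v = 0 -> M *m v = 0.
Proof.
move=> [hM M_ge0] qv0; set w := M *m v.
set N := (adjoint w *m w) 0 0; set Q := qform M w.
have N_ge0 : 0 <= N := dotmx_ge0 w.
have Q_ge0 : 0 <= Q := M_ge0 w.
have Q1_gt0 : 0 < Q + 1 by rewrite ltr_wpDl.
set s := N / (Q + 1).
have s_real : s^* = s by apply/geC0_conj/divr_ge0/ltW.
have expand : qform M (v - s *: w) = - (s * N) - s * N + s * s * Q.
  have vMw : adjoint v *m M *m w = adjoint w *m w by rewrite /w adjoint_mul hM.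
  have wMv : adjoint w *m M *m v = adjoint w *m w by rewrite -mulmxA.
  rewrite /qform adjointB adjointZ s_real !mulmxBl !mulmxBr -!scalemxAl -!scalemxAr.
  rewrite scalerA vMw wMv -trace_mx11 !raddfB /= !mxtraceZ !trace_mx11.
  by rewrite -/(qform M v) -/(qform M w) qv0 -/N -/Q sub0r opprK addrA.
have := M_ge0 (v - s *: w); rewrite -/(qform M _) expand => expand_ge0.
apply: dotmx_eq0; apply/eqP; apply: contraTT expand_ge0 => N0.
have N_gt0 : 0 < N by rewrite lt_def N0.
rewrite lt_geF //.
have -> : - (s * N) - s * N + s * s * Q = - (N ^+ 2 * (Q + 2) / (Q + 1) ^+ 2).
  by rewrite /s; field; rewrite lt0r_neq0.
by rewrite oppr_lt0 !mulr_gt0 ?invr_gt0 ?exprn_gt0 ?ltr_wpDl.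
Qed.

Lemma psd_diag_eq0 (M : 'M[C]_d) i j : psd M -> M i i = 0 -> M j i = 0 /\ M i j = 0.
Proof.
move=> hM Mii0.
have Mji0 : M j i = 0.
  have := congr1 (fun u : vec => u j 0) (psd_mulmx_eq0 hM (etrans (qform_delta M i) Mii0)).
  by rewrite -colE !mxE.
by rewrite (psd_conj i j hM) Mji0 conjC0.
Qed.

Lemma psd_wsum_qform_eq0 n (c : 'I_n -> C) (G : 'I_n -> 'M[C]_d) v l :
  (forall l, 0 <= c l) -> (forall l, psd (G l)) ->
  qform (\sum_l c l *: G l) v = 0 -> c l != 0 -> qform (G l) v = 0.
Proof.
move=> c_ge0 G_psd; rewrite qform_sum => sum0 cl0.
have terms_ge0 k : xpredT k -> 0 <= c k * qform (G k) v.
  by move=> _; rewrite mulr_ge0 // (G_psd k).2.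
have /eqP := psumr_eq0P terms_ge0 sum0 (i := l) isT.
by rewrite mulf_eq0 (negbTE cl0) => /eqP.
Qed.

Definition outer (w : vec) : 'M[C]_d := w *m adjoint w.

Lemma outerE w i j : outer w i j = w i 0 * (w j 0)^*.
Proof. by rewrite mxE big_ord1 !mxE. Qed.

Lemma qform_outer w v : qform (outer w) v = (adjoint v *m w) 0 0 * (adjoint w *m v) 0 0.
Proof. by rewrite /qform /outer !mulmxA -[_ *m _ *m v]mulmxA mxE big_ord1. Qed.

Lemma mxtrace_mul_outer (S : 'M[C]_d) w : \tr (S *m outer w) = qform S w.
Proof. by rewrite /outer mulmxA mxtrace_mulC trace_mx11 /qform mulmxA. Qed.

Lemma outer_delta i : outer (delta_mx i 0) = delta_mx i i.
Proof. by rewrite /outer adjoint_delta mul_delta_mx. Qed.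

Lemma mxtrace_mul_delta (S : 'M[C]_d) i : \tr (S *m delta_mx i i) = S i i.
Proof. by rewrite -outer_delta mxtrace_mul_outer qform_delta. Qed.

Lemma mxtrace_delta_mul (S : 'M[C]_d) i : \tr (delta_mx i i *m S) = S i i.
Proof. by rewrite mxtrace_mulC mxtrace_mul_delta. Qed.

End QuadraticForm.

Section Qutrit.
Variable R : realType.
Local Notation C := R[i].

Definition i1 : 'I_3 := @Ordinal 3 1 isT.

Lemma sum_ord2 (V : nmodType) (F : 'I_2 -> V) : \sum_k F k = F ord0 + F (lift ord0 ord0).
Proof. by rewrite big_ord_recl big_ord1. Qed.

Lemma sum_ord3 (V : nmodType) (F : 'I_3 -> V) : \sum_i F i = F i0 + F i1 + F i2.
Proof.
rewrite !big_ord_recr big_ord0 /= add0r.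
by congr (F _ + F _ + F _); apply: val_inj.
Qed.

Lemma ord3P (P : 'I_3 -> Prop) : P i0 -> P i1 -> P i2 -> forall i, P i.
Proof.
move=> P0 P1 P2 [[|[|[|k]]] lt_k3] //.
- by rewrite (_ : Ordinal lt_k3 = i0) //; apply: val_inj.
- by rewrite (_ : Ordinal lt_k3 = i1) //; apply: val_inj.
- by rewrite (_ : Ordinal lt_k3 = i2) //; apply: val_inj.
Qed.

Definition col3 (a b c : C) : 'cV[C]_3 := \col_(i < 3) nth 0 [:: a; b; c] i.

Lemma dot_col3 a b c (v : 'cV[C]_3) :
  (adjoint (col3 a b c) *m v) 0 0 = a^* * v i0 0 + b^* * v i1 0 + c^* * v i2 0.
Proof. by rewrite mxE sum_ord3 !mxE. Qed.

Definition sqrt2 : C := sqrtC 2.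

Lemma sqrt2_ge0 : 0 <= sqrt2.
Proof. by rewrite sqrtC_ge0 ler0n. Qed.

Lemma sqrt2_sqr : sqrt2 * sqrt2 = 2.
Proof. by rewrite -expr2 sqrtCK. Qed.

Lemma conj_sqrt2 : sqrt2^* = sqrt2.
Proof. exact: geC0_conj sqrt2_ge0. Qed.

Definition rangeA1 := col3 sqrt2 0 1.
Definition kerA1 := col3 1 0 (- sqrt2).
Definition probe := col3 1 0 sqrt2.

Lemma A1_outer : A1 R = 4^-1 *: outer rangeA1.
Proof.
apply/matrixP; apply: ord3P; apply: ord3P;
  rewrite [RHS]mxE outerE !mxE /= -/sqrt2 ?conjC0 ?conjC1 ?conj_sqrt2 ?sqrt2_sqr; ring.
Qed.

Lemma B1_delta : B1 R = delta_mx i0 i0 + 2^-1 *: delta_mx i2 i2.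
Proof. by rewrite /B1 scalerDr scalerA mulVf ?pnatr_eq0 // scale1r. Qed.

Lemma B2_delta : B2 R = delta_mx i1 i1 + 2^-1 *: delta_mx i2 i2.
Proof.
rewrite /B2 B1_delta mx1_sum_delta sum_ord3.
by apply/matrixP; apply: ord3P; apply: ord3P; rewrite !mxE /=; field.
Qed.

Lemma qform_outer_rangeA1_kerA1 : qform (outer rangeA1) kerA1 = 0.
Proof. by rewrite qform_outer !dot_col3 !mxE /= ?conjC0 ?conjC1 rmorphN conj_sqrt2; ring. Qed.

Lemma qform_outer_rangeA1_probe : qform (outer rangeA1) probe = 8.
Proof.
rewrite qform_outer !dot_col3 !mxE /= ?conjC0 ?conjC1 conj_sqrt2.
by transitivity (4 * (sqrt2 * sqrt2)); [ring | rewrite sqrt2_sqr; ring].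
Qed.

Lemma outer_rangeA1_00 : outer rangeA1 i0 i0 = 2.
Proof. by rewrite outerE !mxE /= conj_sqrt2 sqrt2_sqr. Qed.

Lemma A1_00 : A1 R i0 i0 = 2^-1.
Proof. by rewrite !mxE /=; field. Qed.

Lemma A1_11 : A1 R i1 i1 = 0.
Proof. by rewrite !mxE /=; ring. Qed.

Lemma B1_00 : B1 R i0 i0 = 1.
Proof. by rewrite !mxE /=; field. Qed.

Lemma B2_00 : B2 R i0 i0 = 0.
Proof. by rewrite !mxE /=; field. Qed.

Lemma qform_A1_probe : qform (A1 R) probe = 2.
Proof. by rewrite A1_outer qformZ qform_outer_rangeA1_probe; field. Qed.

Lemma qform_B1_probe : qform (B1 R) probe = 2.
Proof.
rewrite B1_delta qformD qformZ !qform_delta_mx !mxE /= ?conjC1 conj_sqrt2 sqrt2_sqr.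
by field.
Qed.

Lemma mxtrace_A1 (S : 'M[C]_3) : \tr (S *m A1 R) = 4^-1 * qform S rangeA1.
Proof. by rewrite A1_outer -scalemxAr mxtraceZ mxtrace_mul_outer. Qed.

Lemma mxtrace_B1 (S : 'M[C]_3) : \tr (S *m B1 R) = S i0 i0 + 2^-1 * S i2 i2.
Proof. by rewrite B1_delta mulmxDr -scalemxAr mxtraceD mxtraceZ !mxtrace_mul_delta. Qed.

Lemma mxtrace_B2 (S : 'M[C]_3) : \tr (S *m B2 R) = S i1 i1 + 2^-1 * S i2 i2.
Proof. by rewrite B2_delta mulmxDr -scalemxAr mxtraceD mxtraceZ !mxtrace_mul_delta. Qed.

Lemma psd_eq_scale_outer_rangeA1 (G : 'M[C]_3) :
  psd G -> G i1 i1 = 0 -> qform G kerA1 = 0 -> G = G i2 i2 *: outer rangeA1.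
Proof.
move=> G_psd G11 Gker.
have Gj1 j : G j i1 = 0 by case: (psd_diag_eq0 j G_psd G11).
have G1j j : G i1 j = 0 by case: (psd_diag_eq0 j G_psd G11).
have Gj0 j : G j i0 = sqrt2 * G j i2.
  have := congr1 (fun u : 'cV[C]_3 => u j 0) (psd_mulmx_eq0 G_psd Gker).
  rewrite /= mxE sum_ord3 !mxE /= Gj1 mulr1 mulr0 addr0 mulrN => /eqP.
  by rewrite subr_eq0 mulrC => /eqP.
have G02 : G i0 i2 = sqrt2 * G i2 i2.
  by rewrite (psd_conj i0 i2 G_psd) Gj0 rmorphM /= conj_sqrt2 -(psd_conj i2 i2 G_psd).
have G00 : G i0 i0 = 2 * G i2 i2 by rewrite Gj0 G02 mulrA sqrt2_sqr.
apply/matrixP; apply: ord3P; apply: ord3P;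
  rewrite [RHS]mxE outerE !mxE /= ?conjC0 ?conjC1 ?conj_sqrt2 ?G00 ?G02 ?Gj0 ?Gj1 ?G1j;
  rewrite -?mulrA ?sqrt2_sqr; ring.
Qed.

(* Lagrange's identity: [(sqrt2, 1)] and [(1, - sqrt2)] are orthogonal of squared length 3. *)
Lemma dot_rangeA1_le (a b c : C) :
  `|sqrt2 * a + c| ^+ 2 <= 3 * (`|a| ^+ 2 + `|b| ^+ 2 + `|c| ^+ 2).
Proof.
have lagrange : `|sqrt2 * a + c| ^+ 2 + `|a - sqrt2 * c| ^+ 2 = 3 * (`|a| ^+ 2 + `|c| ^+ 2).
  rewrite !normCK !(rmorphD, rmorphB, rmorphN, rmorphM) /= conj_sqrt2.
  transitivity ((sqrt2 * sqrt2 + 1) * (a * a^* + c * c^*)); first ring.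
  by rewrite sqrt2_sqr; ring.
apply: (le_trans (y := 3 * (`|a| ^+ 2 + `|c| ^+ 2))).
  by rewrite -lagrange lerDl exprn_ge0.
by rewrite ler_pM2l ?ltr0n // addrAC lerDl exprn_ge0.
Qed.

Lemma opnorm_rangeA1_ge (k : C) :
  0 <= k -> is_opnorm (k *: outer rangeA1) 1 -> 1 <= 3 * k.
Proof.
move=> k_ge0 [_ opnorm_min]; apply: opnorm_min => v.
set t := (adjoint rangeA1 *m v) 0 0.
have -> : (k *: outer rangeA1) *m v = (k * t) *: rangeA1.
  by rewrite -scalemxAl /outer -mulmxA [_ *m v]mx11_scalar mul_mx_scalar scalerA.
rewrite /vnorm.
have -> : \sum_i `|((k * t) *: rangeA1) i 0| ^+ 2 = 3 * (k ^+ 2 * `|t| ^+ 2).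
  rewrite sum_ord3 !mxE /= !normrM normr0 normr1 (ger0_norm k_ge0) (ger0_norm sqrt2_ge0).
  by rewrite !exprMn [sqrt2 ^+ 2]sqrtCK; ring.
have t_le : `|t| ^+ 2 <= 3 * \sum_i `|v i 0| ^+ 2.
  rewrite /t dot_col3 conj_sqrt2 conjC0 conjC1 mul0r addr0 mul1r sum_ord3.
  exact: dot_rangeA1_le.
have k3_ge0 : 0 <= 3 * k by rewrite mulr_ge0.
have sum_ge0 : 0 <= \sum_i `|v i 0| ^+ 2 by apply: sumr_ge0 => i _; rewrite exprn_ge0.
rewrite -(sqrCK k3_ge0) -sqrtCM ?ler_sqrtC ?nnegrE ?mulr_ge0 ?exprn_ge0 //.
have -> : (3 * k) ^+ 2 * \sum_i `|v i 0| ^+ 2 = 3 * (k ^+ 2 * (3 * \sum_i `|v i 0| ^+ 2)).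
  by ring.
by rewrite ler_wpM2l // ler_wpM2l // exprn_ge0.
Qed.

Section Weights.
Variables (n : nat) (c : 'I_n -> C) (G : 'I_n -> 'M[C]_3).
Hypotheses (c_ge0 : forall l, 0 <= c l) (G_psd : forall l, psd (G l)).

Lemma A1_weight_neq0_outer l : A1 R = \sum_l c l *: G l -> c l != 0 ->
  G l = G l i2 i2 *: outer rangeA1.
Proof.
move=> A1E cl0; apply: psd_eq_scale_outer_rangeA1 (G_psd l) _ _.
- rewrite -qform_delta; apply: psd_wsum_qform_eq0 c_ge0 G_psd _ cl0.
  by rewrite -A1E qform_delta A1_11.
- apply: psd_wsum_qform_eq0 c_ge0 G_psd _ cl0.
  by rewrite -A1E A1_outer qformZ qform_outer_rangeA1_kerA1 mulr0.
Qed.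

Lemma B2_weight_eq0 l : B2 R = \sum_l c l *: G l -> G l i0 i0 != 0 -> c l = 0.
Proof.
move=> B2E; apply: contraNeq => cl0; apply/eqP; rewrite -qform_delta.
apply: psd_wsum_qform_eq0 c_ge0 G_psd _ cl0.
by rewrite -B2E qform_delta B2_00.
Qed.

End Weights.

Lemma state_eq_delta0 (S : 'M[C]_3) :
  is_state S -> S i1 i1 = 0 -> S i2 i2 = 0 -> S = delta_mx i0 i0.
Proof.
move=> [S_psd trS] S11 S22.
have Sj1 j : S j i1 = 0 by case: (psd_diag_eq0 j S_psd S11).
have S1j j : S i1 j = 0 by case: (psd_diag_eq0 j S_psd S11).
have Sj2 j : S j i2 = 0 by case: (psd_diag_eq0 j S_psd S22).
have S2j j : S i2 j = 0 by case: (psd_diag_eq0 j S_psd S22).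
have S00 : S i0 i0 = 1 by move: trS; rewrite /mxtrace sum_ord3 S11 S22 !addr0.
by apply/matrixP; apply: ord3P; apply: ord3P; rewrite !mxE /= ?S00 ?Sj1 ?S1j ?Sj2 ?S2j.
Qed.

Lemma no_norm1_joint_parent n (G : 'I_n -> 'M[C]_3) :
  is_POVM G -> (forall l, is_opnorm (G l) 1) ->
  post_processing (Aobs R) G -> post_processing (Bobs R) G -> False.
Proof.
move=> [G_psd _] G_norm [p [p_ge0 [_ pA]]] [q [q_ge0 [q_sum qB]]].
have A1E : A1 R = \sum_l p ord0 l *: G l := pA ord0.
have B1E : B1 R = \sum_l q ord0 l *: G l := qB ord0.
have B2E : B2 R = \sum_l q (lift ord0 ord0) l *: G l := qB (lift ord0 ord0).
have [l /andP[_ pl_gt0]] : exists l, true && (0 < p ord0 l * qform (G l) probe).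
  apply: psumr_neq0P => [l _|]; first by rewrite mulr_ge0 // (G_psd l).2.
  by rewrite -qform_sum -A1E qform_A1_probe; apply/eqP; rewrite pnatr_eq0.
have pl0 : p ord0 l != 0 by apply: contraTneq pl_gt0 => ->; rewrite mul0r ltxx.
have Gl := A1_weight_neq0_outer (p_ge0 ord0) G_psd A1E pl0.
set k := G l i2 i2 in Gl.
have k_ge : 1 <= 3 * k.
  by apply: opnorm_rangeA1_ge; [exact: psd_diag_ge0 | rewrite -Gl].
have Gl00 : G l i0 i0 != 0.
  rewrite Gl mxE outer_rangeA1_00 mulf_neq0 ?pnatr_eq0 //.
  by apply: contraTneq k_ge => ->; rewrite mulr0 ler10.
have ql1 := B2_weight_eq0 (q_ge0 _) G_psd B2E Gl00.
have ql0 : q ord0 l = 1 by have := q_sum l; rewrite sum_ord2 ql1 addr0.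
have : q ord0 l * qform (G l) probe <= 2.
  rewrite -qform_B1_probe B1E qform_sum (bigD1 l) //= lerDl.
  by apply: sumr_ge0 => j _; rewrite mulr_ge0 // (G_psd j).2.
rewrite ql0 mul1r Gl qformZ qform_outer_rangeA1_probe => k8_le.
have : 8 <= 6 :> C.
  apply: (le_trans (y := 3 * (k * 8))).
    by rewrite mulrA -{1}(mul1r 8) ler_wpM2r ?ler0n.
  by rewrite (_ : 6 = 3 * 2 :> C) ?ler_wpM2l ?ler0n //; ring.
by rewrite ler_nat.
Qed.

Section NoncontextualModel.
(* The weights are kept abstract: rewriting with the trace expressions themselves makes
   unification compare [\tr (_ *m A1 R)] with [\tr (_ *m B1 R)], which is very slow. *)
Variables (n : nat) (G S : 'I_n -> 'M[C]_3) (a b1 b2 : 'I_n -> C).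
Hypotheses (G_psd : forall l, psd (G l)) (S_state : forall l, is_state (S l)).
Hypotheses (a_tr : forall l, a l = \tr (S l *m A1 R))
  (b1_tr : forall l, b1 l = \tr (S l *m B1 R)) (b2_tr : forall l, b2 l = \tr (S l *m B2 R)).
Hypotheses (A1E : A1 R = \sum_l a l *: G l) (B1E : B1 R = \sum_l b1 l *: G l)
  (B2E : B2 R = \sum_l b2 l *: G l).

Lemma response_probe_le l :
  a l * qform (G l) probe <= 2^-1 * (b1 l * qform (G l) probe).
Proof.
have S_diag_ge0 l' i : 0 <= S l' i i := psd_diag_ge0 i (S_state l').1.
have half_ge0 : 0 <= 2^-1 :> C by rewrite invr_ge0 ler0n.
have qG_ge0 : 0 <= qform (G l) probe := (G_psd l).2 _.
have a_ge0 l' : 0 <= a l'.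
  by rewrite a_tr mxtrace_A1 mulr_ge0 ?invr_ge0 ?ler0n // (S_state l').1.2.
have b2_ge0 l' : 0 <= b2 l' by rewrite b2_tr mxtrace_B2 addr_ge0 ?mulr_ge0.
have [->|al0] := eqVneq (a l) 0.
  by rewrite mul0r !mulr_ge0 // b1_tr mxtrace_B1 addr_ge0 ?mulr_ge0.
have Gl := A1_weight_neq0_outer a_ge0 G_psd A1E al0.
have [k0|k0] := eqVneq (G l i2 i2) 0.
  by rewrite Gl k0 qformZ !(mul0r, mulr0).
have Gl00 : G l i0 i0 != 0 by rewrite Gl mxE outer_rangeA1_00 mulf_neq0 ?pnatr_eq0.
move: (B2_weight_eq0 b2_ge0 G_psd B2E Gl00); rewrite b2_tr mxtrace_B2 => /eqP.
rewrite paddr_eq0 ?mulr_ge0 // mulf_eq0 invr_eq0 pnatr_eq0 /= => /andP[/eqP S11 /eqP S22].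
have Sl := state_eq_delta0 (S_state l) S11 S22.
have al : a l = 2^-1 by rewrite a_tr Sl mxtrace_delta_mul A1_00.
have b1l : b1 l = 1 by rewrite b1_tr Sl mxtrace_delta_mul B1_00.
by rewrite al b1l mul1r.
Qed.

Lemma qform_A1_probe_le : qform (A1 R) probe <= 2^-1 * qform (B1 R) probe.
Proof.
rewrite {1}A1E {1}B1E !qform_sum mulr_sumr.
by apply: ler_sum => l _; apply: response_probe_le.
Qed.

End NoncontextualModel.

Lemma AB_allows_contextuality :
  allows_contextuality
    (fun O : observable R 3 => O = existT _ 2%N (Aobs R) \/ O = existT _ 2%N (Bobs R)).
Proof.
move=> [n [G [S [[G_psd _] [S_state model]]]]].
pose a l := \tr (S l *m A1 R); pose b1 l := \tr (S l *m B1 R); pose b2 l := \tr (S l *m B2 R).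
have A1E : A1 R = \sum_l a l *: G l := model _ (or_introl erefl) ord0.
have B1E : B1 R = \sum_l b1 l *: G l := model _ (or_intror erefl) ord0.
have B2E : B2 R = \sum_l b2 l *: G l := model _ (or_intror erefl) (lift ord0 ord0).
have := qform_A1_probe_le G_psd S_state (fun=> erefl) (fun=> erefl) (fun=> erefl) A1E B1E B2E.
by rewrite qform_A1_probe qform_B1_probe mulVf ?pnatr_eq0 // lern1.
Qed.

End Qutrit.

Theorem mainTheorem6 (R : realType) :
  (~ exists (n : nat) (G : 'I_n -> 'M[R[i]]_3),
       is_POVM G /\ (forall l, is_opnorm (G l) 1) /\
       post_processing (Aobs R) G /\ post_processing (Bobs R) G) /\
  allows_contextuality
    (fun O : observable R 3 => O = existT _ 2%N (Aobs R) \/ O = existT _ 2%N (Bobs R)).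
Proof.
split; last exact: AB_allows_contextuality.
by move=> [n [G [POVM_G [G_norm [GA GB]]]]]; exact: no_norm1_joint_parent POVM_G G_norm GA GB.
Qed.
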